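(* The MPB rule $M$ does not satisfy the narrow-top criterion; that is, there exists a PB instance $I$ and a project $p$ with $p\in A_i$ for every voter $i\in N$ such that $p\notin W_M(I)$.
   Context: A PB instance is $I=\langle N,P,c,b,\mathcal{A}\rangle$ with voters $N=\{1,\dots,n\}$, projects $P$, costs $c:P\to\mathbb{N}$, budget $b\in\mathbb{N}$, and approval sets $A_i\subseteq P$. $c(S)=\sum_{p\in S}c(p)$; $S$ is feasible if $c(S)\le b$; $u_i(S)=c(S\cap A_i)$. The MPB rule $M$ outputs $M(I)$, the set of all feasible $S$ maximizing $\min_{i\in N}u_i(S)$ among feasible sets. $W_M(I)=\{p\in P:\exists S\in M(I),\ p\in S\}$. *)

From mathcomp Require Import all_boot.
Set Implicit Arguments. Unset Strict Implicit. Unset Printing Implicit Defensive.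

Record PBInstance := {
  nvoters : nat;
  nvoters_pos : 0 < nvoters;
  nprojects : nat;
  cost : 'I_nprojects -> nat;
  budget : nat;
  approval : 'I_nvoters -> {set 'I_nprojects}
}.

Arguments cost : clear implicits.
Arguments approval : clear implicits.
Arguments budget : clear implicits.

Section MPB.
Variable I : PBInstance.
Local Notation voter := ('I_(nvoters I)).
Local Notation project := ('I_(nprojects I)).

Definition costS (S : {set project}) : nat := \sum_(p in S) cost I p.
Definition feasible (S : {set project}) : bool := costS S <= budget I.
Definition util (i : voter) (S : {set project}) : nat := costS (S :&: approval I i).
Definition minutil (S : {set project}) : nat :=
  \big[minn/costS S]_(i : voter) util i S.

Definition MPB_outcome (S : {set project}) : Prop :=
  feasible S /\ forall T : {set project}, feasible T -> minutil T <= minutil S.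

Definition MPB_winner (p : project) : Prop :=
  exists S : {set project}, MPB_outcome S /\ p \in S.
End MPB.
Arguments costS : clear implicits.
Arguments feasible : clear implicits.
Arguments util : clear implicits.
Arguments minutil : clear implicits.
Arguments MPB_outcome : clear implicits.
Arguments MPB_winner : clear implicits.

From mathcomp Require Import all_boot.

Set Implicit Arguments.
Unset Strict Implicit.

(* Take a single voter who approves both projects p (cost 1) and q (cost 2),
   with budget 2.  Each voter's utility is then the total cost of the outcome,
   so MPB selects exactly the feasible sets of maximal cost, i.e. {q}; the
   commonly approved project p cannot be added to it within the budget. *)

Section MPBWinners.
Variable I : PBInstance.

Lemma minutil_unanimous (S : {set 'I_(nprojects I)}) :
  (forall i, approval I i = setT) -> minutil I S = costS I S.
Proof.
move=> allT; apply: (big_ind (fun k => k = costS I S)) => // [x y -> ->|i _].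
  exact: minnn.
by rewrite /util allT setIT.
Qed.

Lemma not_MPB_winner (p : 'I_(nprojects I)) (T : {set 'I_(nprojects I)}) :
  feasible I T ->
  (forall S, feasible I S -> p \in S -> minutil I S < minutil I T) ->
  ~ MPB_winner I p.
Proof.
move=> feasT beaten [S [[feasS optS] pS]].
by have := optS T feasT; rewrite leqNgt beaten.
Qed.

End MPBWinners.

Definition narrow_top_instance : PBInstance :=
  {| nvoters := 1; nvoters_pos := erefl true; nprojects := 2;
     cost := fun p : 'I_2 => p.+1; budget := 2; approval := fun _ => setT |}.

Lemma costS_narrow_top (S : {set 'I_2}) :
  costS narrow_top_instance S = (ord0 \in S) + (ord_max \in S) * 2.
Proof.
rewrite /costS big_mkcond !big_ord_recl big_ord0 /=.
have -> : lift ord0 (@ord0 0) = ord_max by apply: val_inj.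
by case: (ord0 \in S); case: (ord_max \in S).
Qed.

Theorem proposition2 :
  exists (I : PBInstance) (p : 'I_(nprojects I)),
    (forall i : 'I_(nvoters I), p \in approval I i) /\ ~ MPB_winner I p.
Proof.
exists narrow_top_instance, ord0; split=> [i|]; first by rewrite in_setT.
have feas_max : feasible narrow_top_instance [set ord_max].
  by rewrite /feasible costS_narrow_top !in_set1.
apply: (not_MPB_winner feas_max) => S feasS p_in_S.
have q_notin_S : ord_max \notin S.
  by apply: contraTN feasS; rewrite /feasible costS_narrow_top p_in_S => ->.
by rewrite !minutil_unanimous // !costS_narrow_top p_in_S (negbTE q_notin_S) !in_set1.
Qed.
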